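(* Let $\mathcal{S}=\{s_1,\dots,s_N\}$ be a finite state space, $\mathcal{A}$ a finite action space, $\gamma\in(0,1)$, and consider the real MDP $\langle\mathcal{S},\mathcal{A},\mathbb{P},R,\gamma\rangle$ and the DT MDP $\langle\mathcal{S},\mathcal{A},\mathbb{P}',R',\gamma\rangle$. Then for all $i,j$, $$|V^*_{\mathrm{real}}(s_i)-V^*_{\mathrm{DT}}(s_j)|\le\bar d(s_i,s_j).$$
   Context: $\mathbb{P}(\cdot|s,a),\mathbb{P}'(\cdot|s,a)$ are probability distributions on $\mathcal{S}$; $R,R':\mathcal{S}\times\mathcal{A}\to\mathbb{R}$. $V^*_{\mathrm{real}}$ is the unique solution of $V(s)=\max_a\{R(s,a)+\gamma\sum_{\tilde s}\mathbb{P}(\tilde s|s,a)V(\tilde s)\}$, and $V^*_{\mathrm{DT}}$ the analogue with $\mathbb{P}',R'$. For distributions $P,Q$ on $\mathcal{S}$ and a cost $d:\mathcal{S}\times\mathcal{S}\to[0,\infty)$ (not required to vanish on the diagonal; first argument a real-MDP state, second a DT-MDP state), $W_1(P,Q;d)=\min_\Lambda\sum_{i,j}\lambda_{i,j}d(s_i,s_j)$ over nonnegative $N\times N$ matrices with row sums $P(s_i)$ and column sums $Q(s_j)$. Define $d_0\equiv0$ and $d_n(s_i,s_j)=\max_a\{|R(s_i,a)-R'(s_j,a)|+\gamma W_1(\mathbb{P}(\cdot|s_i,a),\mathbb{P}'(\cdot|s_j,a);d_{n-1})\}$; the DT bisimulation metric $\bar d$ is the pointwise limit of the nondecreasing sequence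 $(d_n)$. *)

From HB Require Import structures.
From mathcomp Require Import all_boot all_order all_algebra.
From mathcomp Require Import all_classical all_reals all_analysis.
Set Implicit Arguments. Unset Strict Implicit. Unset Printing Implicit Defensive.
Import Order.TTheory GRing.Theory Num.Theory numFieldNormedType.Exports.
Local Open Scope classical_set_scope.
Local Open Scope ring_scope.

Section DTBisim.
Variables (R : realType) (S A : finType).

(* maximum of F over the finite (nonempty) action set A;
   the value 0 for empty A is a junk default, never used (A is assumed nonempty). *)
Definition maxA (F : A -> R) : R :=
  match [pick a : A] with
  | Some a0 => \big[Num.max/F a0]_(a : A) F a
  | None => 0
  end.

Definition is_distr (P : S -> R) : Prop :=
  (forall s, 0 <= P s) /\ \sum_(s : S) P s = 1.

Definition coupling (P Q : S -> R) (Lam : S -> S -> R) : Prop :=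
  (forall i j, 0 <= Lam i j) /\
  (forall i, \sum_(j : S) Lam i j = P i) /\
  (forall j, \sum_(i : S) Lam i j = Q j).

Definition W1 (P Q : S -> R) (d : S -> S -> R) : R :=
  inf [set c | exists Lam, coupling P Q Lam /\
                 c = \sum_(i : S) \sum_(j : S) Lam i j * d i j].

Fixpoint dn (P P' : S -> A -> S -> R) (Rw Rw' : S -> A -> R) (gamma : R) (n : nat)
  : S -> S -> R :=
  match n with
  | 0 => fun _ _ => 0
  | n'.+1 => fun s t =>
      maxA (fun a => `|Rw s a - Rw' t a|
                     + gamma * W1 (P s a) (P' t a) (dn P P' Rw Rw' gamma n'))
  end.

(* DT bisimulation metric: pointwise limit of the nondecreasing sequence d_n *)
Definition dbar (P P' : S -> A -> S -> R) (Rw Rw' : S -> A -> R) (gamma : R)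
  (s t : S) : R :=
  limn (fun n => dn P P' Rw Rw' gamma n s t).

Definition bellman_opt (P : S -> A -> S -> R) (Rw : S -> A -> R) (gamma : R)
  (V : S -> R) : Prop :=
  forall s, V s = maxA (fun a => Rw s a + gamma * \sum_(t : S) P s a t * V t).

End DTBisim.

(* The Bellman optimality operators are compared through couplings: for a
   coupling Lam of p and q, the difference between the expectation of V under
   p and that of V' under q is a Lam-average of the differences V(s_i) - V'(s_j),
   so it is bounded by W_1(p, q; d) whenever |V(s_i) - V'(s_j)| <= d(s_i, s_j).
   Since a maximum over actions moves by at most the maximal difference of its
   arguments, induction on n gives
     |V*_real(s_i) - V*_DT(s_j)| <= d_n(s_i, s_j) + gamma^n M
   with M a bound of |V*_real - V*_DT| on S x S.  The sequence d_n is
   nondecreasing and bounded by max |R - R'| / (1 - gamma), so it converges to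
   its supremum dbar, and the slack gamma^n M vanishes as n -> oo. *)
From Pilot Require Import Defs.
From HB Require Import structures.
From mathcomp Require Import all_boot all_order all_algebra.
From mathcomp Require Import all_classical all_reals all_analysis.
From mathcomp Require Import ring lra.

Set Implicit Arguments.
Unset Strict Implicit.
Unset Printing Implicit Defensive.
Import Order.TTheory GRing.Theory Num.Theory.
Import numFieldNormedType.Exports.
(* Order.TTheory exports a lemma also named maxA. *)
Local Notation maxA := Pilot.Defs.maxA.
Local Open Scope ring_scope.

Lemma exists_norm_bound (R : realType) (T : finType) (f : T -> R) :
  exists M : R, forall x, `|f x| <= M.
Proof. by exists (\sum_x `|f x|) => x; rewrite (bigD1 x) //= lerDl sumr_ge0. Qed.

Lemma le_of_geometric_slack (R : realType) (gamma M x y : R) :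
  0 <= gamma < 1 -> (forall n, x <= y + gamma ^+ n * M) -> x <= y.
Proof.
move=> /andP[g0 g1] slack.
have slack_cvg : ((fun n => y + gamma ^+ n * M) @ \oo --> y)%classic.
  rewrite -[X in (_ --> X)%classic]addr0 -(mul0r M).
  apply: cvgD; first exact: cvg_cst.
  by apply: cvgMr_tmp; apply: cvg_expr; rewrite ger0_norm.
rewrite -(cvg_lim _ slack_cvg) //.
by apply: limr_ge; [exact: cvgP slack_cvg | exact: nearW].
Qed.

Section MaxOverActions.
Variables (R : realType) (A : finType) (a0 : A).
Implicit Types (F G : A -> R).

Lemma le_maxA F a : F a <= maxA F.
Proof.
rewrite /maxA; case: pickP => [b _|/(_ a)//].
by rewrite (bigD1 a) //= le_max lexx.
Qed.

Lemma maxA_le F c : (forall a, F a <= c) -> maxA F <= c.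
Proof.
move=> F_le; rewrite /maxA; case: pickP => [b _|/(_ a0)//].
by apply: (big_ind (fun x => x <= c)) => // x y xc yc; rewrite ge_max xc yc.
Qed.

Lemma ler_maxA F G : (forall a, F a <= G a) -> maxA F <= maxA G.
Proof. by move=> FG; apply: maxA_le => a; apply: le_trans (FG a) (le_maxA G a). Qed.

Lemma maxA_dist F G : `|maxA F - maxA G| <= maxA (fun a => `|F a - G a|).
Proof.
set D := maxA (fun a => `|F a - G a|).
have maxA_le_shift F' G' : (forall a, F' a <= G' a + `|F a - G a|) ->
    maxA F' <= maxA G' + D.
  move=> FG; apply: maxA_le => a; apply: le_trans (FG a) _.
  by apply: lerD; [exact: le_maxA | exact: le_maxA].
have FG : maxA F <= maxA G + D.
  by apply: maxA_le_shift => a; have := ler_norm (F a - G a); lra.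
have GF : maxA G <= maxA F + D.
  by apply: maxA_le_shift => a; rewrite distrC; have := ler_norm (G a - F a); lra.
rewrite ler_norml; apply/andP; split; lra.
Qed.

End MaxOverActions.

Section Transport.
Variables (R : realType) (S : finType).
Implicit Types (p q : S -> R) (Lam d : S -> S -> R).

Definition transport_cost Lam d : R := \sum_i \sum_j Lam i j * d i j.

Lemma coupling_product p q :
  is_distr p -> is_distr q -> coupling p q (fun i j => p i * q j).
Proof.
move=> [p0 p1] [q0 q1]; split; [|split].
- by move=> i j; apply: mulr_ge0.
- by move=> i; rewrite -mulr_sumr q1 mulr1.
- by move=> j; rewrite -mulr_suml p1 mul1r.
Qed.

Lemma ler_transport_cost Lam d d' :
  (forall i j, 0 <= Lam i j) -> (forall i j, d i j <= d' i j) ->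
  transport_cost Lam d <= transport_cost Lam d'.
Proof.
move=> Lam0 dd'; apply: ler_sum => i _; apply: ler_sum => j _.
exact: ler_wpM2l.
Qed.

Lemma transport_cost_addr p q Lam d e :
  is_distr p -> coupling p q Lam ->
  transport_cost Lam (fun i j => d i j + e) = transport_cost Lam d + e.
Proof.
move=> [_ p1] [_ [row_sum _]].
have mass : \sum_i \sum_j Lam i j = 1.
  by rewrite -p1; apply: eq_bigr => i _; exact: row_sum.
rewrite /transport_cost -[e in RHS]mul1r -mass mulr_suml -big_split /=.
apply: eq_bigr => i _; rewrite mulr_suml -big_split /=.
by apply: eq_bigr => j _; rewrite mulrDr.
Qed.

Lemma W1_le_cost p q d Lam :
  (forall i j, 0 <= d i j) -> coupling p q Lam -> W1 p q d <= transport_cost Lam d.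
Proof.
move=> d0 hLam; apply: ge_inf; last by exists Lam.
exists 0 => _ [L [[L0 _] ->]].
by apply: sumr_ge0 => i _; apply: sumr_ge0 => j _; apply: mulr_ge0.
Qed.

Lemma lb_le_W1 p q d c :
  is_distr p -> is_distr q ->
  (forall Lam, coupling p q Lam -> c <= transport_cost Lam d) -> c <= W1 p q d.
Proof.
move=> hp hq c_le; apply: lb_le_inf; last by move=> _ [L [hL ->]]; exact: c_le.
by exists (transport_cost (fun i j => p i * q j) d); exists (fun i j => p i * q j);
  split => //; exact: coupling_product.
Qed.

Lemma W1_ge0 p q d :
  is_distr p -> is_distr q -> (forall i j, 0 <= d i j) -> 0 <= W1 p q d.
Proof.
move=> hp hq d0; apply: lb_le_W1 => // L [L0 _].
by apply: sumr_ge0 => i _; apply: sumr_ge0 => j _; apply: mulr_ge0.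
Qed.

Lemma ler_W1 p q d d' :
  is_distr p -> is_distr q -> (forall i j, 0 <= d i j) ->
  (forall i j, d i j <= d' i j) -> W1 p q d <= W1 p q d'.
Proof.
move=> hp hq d0 dd'; apply: lb_le_W1 => // L hL.
apply: le_trans (W1_le_cost d0 hL) _.
by apply: ler_transport_cost => //; case: hL.
Qed.

Lemma W1_le_ub p q d c :
  is_distr p -> is_distr q -> (forall i j, 0 <= d i j <= c) -> W1 p q d <= c.
Proof.
move=> hp hq d_bnd; have hL := coupling_product hp hq.
have d0 i j : 0 <= d i j by case/andP: (d_bnd i j).
apply: le_trans (W1_le_cost d0 hL) _.
apply: le_trans (ler_transport_cost (d' := fun i j => 0 + c) _ _) _.
- by case: hL.
- by move=> i j; rewrite add0r; case/andP: (d_bnd i j).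
rewrite (transport_cost_addr _ _ hp hL) /transport_cost big1 ?add0r // => i _.
by rewrite big1 // => j _; rewrite mulr0.
Qed.

Lemma dist_expect_le_cost p q Lam (V V' : S -> R) :
  coupling p q Lam ->
  `|\sum_i p i * V i - \sum_j q j * V' j|
    <= transport_cost Lam (fun i j => `|V i - V' j|).
Proof.
move=> [Lam0 [row_sum col_sum]].
have -> : \sum_i p i * V i - \sum_j q j * V' j =
          \sum_i \sum_j Lam i j * (V i - V' j).
  have -> : \sum_i p i * V i = \sum_i \sum_j Lam i j * V i.
    by apply: eq_bigr => i _; rewrite -row_sum mulr_suml.
  have -> : \sum_j q j * V' j = \sum_i \sum_j Lam i j * V' j.
    by rewrite exchange_big; apply: eq_bigr => j _; rewrite -col_sum mulr_suml.
  rewrite -sumrB; apply: eq_bigr => i _; rewrite -sumrB.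
  by apply: eq_bigr => j _; rewrite mulrBr.
apply: (le_trans (ler_norm_sum _ _ _)); apply: ler_sum => i _.
apply: (le_trans (ler_norm_sum _ _ _)); apply: ler_sum => j _.
by rewrite normrM ger0_norm.
Qed.

Lemma dist_expect_le_W1 p q (V V' : S -> R) d e :
  is_distr p -> is_distr q -> (forall i j, `|V i - V' j| <= d i j + e) ->
  `|\sum_i p i * V i - \sum_j q j * V' j| <= W1 p q d + e.
Proof.
move=> hp hq dV; rewrite -lerBlDr; apply: lb_le_W1 => // L hL.
rewrite lerBlDr -(transport_cost_addr _ _ hp hL).
apply: le_trans (dist_expect_le_cost V V' hL) _.
by apply: ler_transport_cost => //; case: hL.
Qed.

End Transport.

Section BisimulationMetric.
Variables (R : realType) (S A : finType) (a0 : A).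
Variables (P P' : S -> A -> S -> R) (Rw Rw' : S -> A -> R) (gamma : R).
Hypotheses (gamma_ge0 : 0 <= gamma) (P_distr : forall s a, is_distr (P s a))
  (P'_distr : forall s a, is_distr (P' s a)).

Local Notation d := (dn P P' Rw Rw' gamma).

Lemma dnS n s t :
  d n.+1 s t = maxA (fun a => `|Rw s a - Rw' t a| + gamma * W1 (P s a) (P' t a) (d n)).
Proof. by []. Qed.

Lemma dn_ge0 n s t : 0 <= d n s t.
Proof.
elim: n s t => [//|n IH] s t; rewrite dnS.
apply: le_trans (le_maxA _ a0); apply: addr_ge0 => //.
by apply: mulr_ge0 => //; apply: W1_ge0.
Qed.

Lemma dn_nondecreasing s t : nondecreasing_seq (fun n => d n s t).
Proof.
apply/nondecreasing_seqP => n; elim: n s t => [|n IH] s t; first exact: dn_ge0.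
rewrite dnS [d n.+2 s t]dnS; apply: (ler_maxA a0) => a.
rewrite lerD2l; apply: ler_wpM2l => //.
by apply: ler_W1 => //; exact: dn_ge0.
Qed.

Lemma dn_le K n s t : gamma < 1 ->
  (forall s t a, `|Rw s a - Rw' t a| <= K) -> d n s t <= K / (1 - gamma).
Proof.
move=> gamma_lt1 RK.
have K0 : 0 <= K by apply: le_trans (RK s t a0).
have fixpoint : K + gamma * (K / (1 - gamma)) = K / (1 - gamma).
  by field; rewrite subr_eq0 gt_eqF.
elim: n s t => [|n IH] s t; first by rewrite divr_ge0 // subr_ge0 ltW.
rewrite dnS; apply: (maxA_le a0) => a; rewrite -fixpoint.
apply: lerD => //; apply: ler_wpM2l => //.
by apply: W1_le_ub => // i j; rewrite dn_ge0 IH.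
Qed.

Lemma dn_le_dbar n s t : gamma < 1 -> d n s t <= dbar P P' Rw Rw' gamma s t.
Proof.
move=> gamma_lt1.
have [K RK] := exists_norm_bound (fun x : S * S * A => Rw x.1.1 x.2 - Rw' x.1.2 x.2).
apply: nondecreasing_cvgn_le; first exact: dn_nondecreasing.
apply: nondecreasing_is_cvgn; first exact: dn_nondecreasing.
exists (K / (1 - gamma)) => _ [m _ <-].
by apply: dn_le => // s' t' a; exact: (RK (s', t', a)).
Qed.

Lemma bellman_dist_le_dn V V' M :
  bellman_opt P Rw gamma V -> bellman_opt P' Rw' gamma V' ->
  (forall s t, `|V s - V' t| <= M) ->
  forall n s t, `|V s - V' t| <= d n s t + gamma ^+ n * M.
Proof.
move=> hV hV' VM; elim=> [|n IH] s t; first by rewrite add0r mul1r.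
rewrite (hV s) (hV' t); apply: le_trans (maxA_dist a0 _ _) _.
apply: (maxA_le a0) => a; rewrite dnS.
apply: le_trans (lerD (le_maxA _ a) (lexx _)); rewrite -[leRHS]addrA.
set x := \sum_i _; set y := \sum_j _.
have -> : Rw s a + gamma * x - (Rw' t a + gamma * y)
          = (Rw s a - Rw' t a) + gamma * (x - y) by ring.
apply: le_trans (ler_normD _ _) _; rewrite lerD2l.
rewrite normrM ger0_norm // exprS -mulrA -mulrDr ler_wpM2l //.
exact: dist_expect_le_W1 (P_distr s a) (P'_distr t a) IH.
Qed.

End BisimulationMetric.

Theorem corollary1 (R : realType) (S A : finType) (a0 : A)
  (P P' : S -> A -> S -> R) (Rw Rw' : S -> A -> R) (gamma : R)
  (Vreal VDT : S -> R) :
  0 < gamma < 1 ->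
  (forall s a, is_distr (P s a)) ->
  (forall s a, is_distr (P' s a)) ->
  bellman_opt P Rw gamma Vreal ->
  bellman_opt P' Rw' gamma VDT ->
  forall si sj : S, `|Vreal si - VDT sj| <= dbar P P' Rw Rw' gamma si sj.
Proof.
move=> /andP[gamma_gt0 gamma_lt1] hP hP' hV hV' si sj.
have gamma_ge0 := ltW gamma_gt0.
have [M VM] := exists_norm_bound (fun x : S * S => Vreal x.1 - VDT x.2).
have V_bounded s t : `|Vreal s - VDT t| <= M by exact: VM (s, t).
apply: (@le_of_geometric_slack _ gamma M); first by rewrite gamma_ge0.
move=> n; apply: le_trans (bellman_dist_le_dn a0 gamma_ge0 hP hP' hV hV' V_bounded n si sj) _.
by rewrite lerD2r dn_le_dbar.
Qed.
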